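(* Let $X$ be a reflexive Banach space with dual $X^*$, let $f\colon X\to\mathbb{R}$ and $\psi^*\colon X^*\to\mathbb{R}$ be differentiable, let $N\ge 1$, and let real coefficients $\{a_{k,i}\}_{0\le i<k\le N}$ and $\{b_{k,i}\}_{0\le i\le k\le N}$ be given, with the convention $b_{0,0}=-1$. Assume \[ \sum_{j=0}^{k+1} b_{k+1,j}=0\qquad\text{for } k=0,1,\dots,N-1 . \] Let $q_0\in X$ be arbitrary, set $r_0=-b_{N,N}\nabla f(q_0)$, and define for $k=0,1,\dots,N-1$ \[ q_{k+1}=q_k-\sum_{i=0}^{k} a_{N-i,\,N-1-k}\,\nabla\psi^*(r_i),\qquad r_{k+1}=r_k-\sum_{i=0}^{k+1} b_{N-i,\,N-1-k}\,\nabla f(q_i). \] Then $r_N=\nabla f(q_N)$.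
   Context: The iteration in the claim is called the mirror dual of the $N$-step coupled first-order method (CFOM) with the same coefficients, where the CFOM (for differentiable $f\colon X\to\mathbb{R}$, $\phi^*\colon X^*\to\mathbb{R}$) is: $y_0\in X^*$, $x_0=\nabla\phi^*(y_0)$, and for $k=0,\dots,N-1$, $y_{k+1}=y_k-\sum_{i=0}^{k}a_{k+1,i}\nabla f(x_i)$, $x_{k+1}=x_k-\sum_{i=0}^{k+1}b_{k+1,i}\nabla\phi^*(y_i)$. Gradients $\nabla f(x)\in X^*$ are Fréchet gradients, and $\nabla\psi^*(r)\in X^{**}=X$. *)

From mathcomp Require Import all_boot all_order all_algebra.
From mathcomp Require Import all_classical all_reals all_analysis.
Set Implicit Arguments. Unset Strict Implicit. Unset Printing Implicit Defensive.
Import Order.TTheory GRing.Theory Num.Theory.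
Import numFieldNormedType.Exports.
Local Open Scope ring_scope.

Definition lin_functional (R : realType) (V : lmodType R) (phi : V -> R) :=
  forall (c : R) (u v : V), phi (c *: u + v) = c * phi u + phi v.

(* [reflexive_duality pair]: the Banach spaces X and Xs, with the bilinear
   pairing [pair : Xs -> X -> R], realise Xs as the (topological) dual X^* of X
   (every continuous linear functional on X is [pair y] for some y, and the
   norm of Xs is the dual norm), and X is reflexive: every continuous linear
   functional on Xs = X^* is evaluation [fun y => pair y x] at some x in X. *)
Definition reflexive_duality (R : realType) (X Xs : completeNormedModType R)
  (pair : Xs -> X -> R) : Prop :=
  (forall y, lin_functional (pair y)) /\
      (forall x, lin_functional (fun y => pair y x)) /\
      (forall y x, `|pair y x| <= `|y| * `|x|) /\
      (forall y (e : R), 0 < e -> exists x : X, `|x| <= 1 /\ `|y| - e < `|pair y x|) /\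
      (forall phi : X -> R, lin_functional phi -> continuous phi ->
          exists y, phi = pair y) /\
      (forall phi : Xs -> R, lin_functional phi -> continuous phi ->
          exists x, phi = fun y => pair y x).

Definition is_gradient (R : realType) (X Xs : completeNormedModType R)
  (pair : Xs -> X -> R) (f : X -> R) (g : X -> Xs) : Prop :=
  forall x, differentiable f x /\ ('d f x : X -> R) = pair (g x).

(* [h] is the Frechet gradient of [psi : Xs -> R], an element of X^** = X. *)
Definition is_gradient_dual (R : realType) (X Xs : completeNormedModType R)
  (pair : Xs -> X -> R) (psi : Xs -> R) (h : Xs -> X) : Prop :=
  forall y, differentiable psi y /\ ('d psi y : Xs -> R) = (fun s => pair s (h y)).

From mathcomp Require Import all_boot all_order all_algebra.
From mathcomp Require Import all_classical all_reals all_analysis.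
From mathcomp Require Import zify.
Import Order.TTheory GRing.Theory Num.Theory.
Import numFieldNormedType.Exports.
Local Open Scope ring_scope.

(* Only the recursion for r matters: by induction, r_n is the combination of
   the gradients g_i = grad f(q_i), i <= n, whose i-th coefficient is minus the
   partial row sum of b_{N-i,.} over the columns N-n, ..., N-i.  For n = N these
   are full row sums, which vanish for i < N by hypothesis, while the last one
   is -b_{0,0} = 1.  No property of f, psi or the duality is used. *)

Section MirrorDualRecursion.

Variables (R : pzRingType) (V : lmodType R) (N : nat) (b : nat -> nat -> R).
Variables (g r : nat -> V).

Hypothesis r0 : r 0%N = (- b N N) *: g 0%N.
Hypothesis r_step : forall k : nat, (k < N)%N ->
  r k.+1 = r k - \sum_(i < k.+2) b (N - i)%N (N - 1 - k)%N *: g i.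

Definition mirror_coef (n i : nat) : R :=
  - \sum_(N - n <= j < (N - i).+1) b (N - i)%N j.

Lemma mirror_coefS (n i : nat) : (i <= n)%N -> (n < N)%N ->
  mirror_coef n.+1 i = mirror_coef n i - b (N - i)%N (N - n.+1)%N.
Proof.
move=> le_in lt_nN; rewrite /mirror_coef (@big_ltn _ _ _ (N - n.+1)); last by lia.
by rewrite (_ : (N - n.+1).+1 = N - n)%N ?opprD 1?addrC //; lia.
Qed.

Lemma mirror_coef_diag (n : nat) : mirror_coef n n = - b (N - n)%N (N - n)%N.
Proof. by rewrite /mirror_coef big_nat1. Qed.

Lemma mirror_iterate_expansion (n : nat) : (n <= N)%N ->
  r n = \sum_(i < n.+1) mirror_coef n i *: g i.
Proof.
elim: n => [|n IH] le_nN.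
  by rewrite big_ord_recr big_ord0 /= add0r mirror_coef_diag subn0 r0.
rewrite r_step // (IH (ltnW le_nN)) (_ : N - 1 - n = N - n.+1)%N; last by lia.
rewrite [RHS]big_ord_recr [X in _ - X]big_ord_recr /= mirror_coef_diag.
rewrite opprD addrA scaleNr; congr (_ - _).
rewrite -sumrB; apply: eq_bigr => i _.
by rewrite mirror_coefS ?scalerBl // -ltnS.
Qed.

Hypothesis b00 : b 0%N 0%N = -1.
Hypothesis row_sum0 : forall k : nat, (k < N)%N -> \sum_(j < k.+2) b k.+1 j = 0.

Lemma mirror_coef_final (i : nat) : (i < N)%N -> mirror_coef N i = 0.
Proof.
move=> lt_iN; rewrite /mirror_coef subnn (_ : (N - i = (N - i).-1.+1)%N); last by lia.
by rewrite big_mkord row_sum0 ?oppr0 //; lia.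
Qed.

Lemma mirror_iterate_last : r N = g N.
Proof.
rewrite mirror_iterate_expansion // big_ord_recr /= mirror_coef_diag subnn b00.
by rewrite opprK scale1r big1 ?add0r // => i _; rewrite mirror_coef_final ?scale0r.
Qed.

End MirrorDualRecursion.

Theorem proposition3p1 (R : realType) (X Xs : completeNormedModType R)
  (pair : Xs -> X -> R) (f : X -> R) (psi : Xs -> R)
  (gf : X -> Xs) (gpsi : Xs -> X) (N : nat) (a b : nat -> nat -> R)
  (q : nat -> X) (r : nat -> Xs) :
  reflexive_duality pair ->
  is_gradient pair f gf ->
  is_gradient_dual pair psi gpsi ->
  (1 <= N)%N ->
  b 0%N 0%N = -1 ->
  (forall k : nat, (k < N)%N -> \sum_(j < k.+2) b k.+1 j = 0) ->
  r 0%N = (- b N N) *: gf (q 0%N) ->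
  (forall k : nat, (k < N)%N ->
     q k.+1 = q k - \sum_(i < k.+1) a (N - i)%N (N - 1 - k)%N *: gpsi (r i)) ->
  (forall k : nat, (k < N)%N ->
     r k.+1 = r k - \sum_(i < k.+2) b (N - i)%N (N - 1 - k)%N *: gf (q i)) ->
  r N = gf (q N).
Proof.
move=> _ _ _ _ b00 row_sum0 r0 _ r_step.
exact: (@mirror_iterate_last R Xs N b (gf \o q) r r0 r_step b00 row_sum0).
Qed.
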